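(* Let $\mathscr{D}_n$ be the set of derangements of $[n]=\{1,\dots,n\}$. For every integer $m\ge 2$ and every $0\le r\le m-1$, $$\lim_{n\to\infty}\frac{\left|\{\pi\in\mathscr{D}_n:\ \mathrm{maj}(\pi)\equiv r\pmod m\}\right|}{|\mathscr{D}_n|}=\frac1m .$$ That is, the major index over derangements of $[n]$ has the balanced property.
   Context: A derangement of $[n]$ is a permutation $\pi=\pi_1\pi_2\cdots\pi_n$ of $[n]$ with $\pi_i\ne i$ for all $i$. The major index of a permutation $\pi=\pi_1\cdots\pi_n$ is $\mathrm{maj}(\pi)=\sum_{i:\,\pi_i>\pi_{i+1}} i$. A statistic $\xi$ on sets $Q_n$ has the balanced property if for every $m\ge 2$ and every $0\le r\le m-1$, $\lim_{n\to\infty}|\{\pi\in Q_n:\xi(\pi)\equiv r \pmod m\}|/|Q_n| = 1/m$. *)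

From HB Require Import structures.
From mathcomp Require Import all_boot all_order all_algebra all_fingroup.
Set Implicit Arguments. Unset Strict Implicit. Unset Printing Implicit Defensive.
Import Order.TTheory GRing.Theory Num.Theory.

(* Permutations of [n] are represented as 'S_n, permutations of 'I_n = {0,...,n-1};
   the value i+1 of the paper corresponds to i here (an order-preserving relabelling). *)

Definition derangement n (s : 'S_n) : bool := [forall i : 'I_n, s i != i].

(* major index: sum of the (1-based) positions i in {1..n-1} with pi_i > pi_{i+1}.
   In 0-based terms: positions j in {0..n-2} with s j > s (j+1), contributing j+1. *)
Definition maj n (s : 'S_n) : nat :=
  \sum_(j < n) \sum_(k < n | (nat_of_ord k == j.+1) && (nat_of_ord (s k) < nat_of_ord (s j))%N) j.+1.

Definition derangements n : {set 'S_n} := [set s : 'S_n | derangement s].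

Definition derangements_maj_mod n (m r : nat) : {set 'S_n} :=
  [set s : 'S_n | derangement s && (maj s %% m == r)].

Definition maj_ratio n (m r : nat) : rat :=
  (#|derangements_maj_mod n m r|%:R / #|derangements n|%:R)%R.

From HB Require Import structures.
From mathcomp Require Import all_boot all_order all_algebra all_fingroup.
Import Order.TTheory GRing.Theory Num.Theory.
From mathcomp Require Import ring lra.
Set Implicit Arguments. Unset Strict Implicit. Unset Printing Implicit Defensive.

(* Call [s] head-high when it maps each of the first [m] positions to a value
   [>= m]. Composing a head-high [s] with the cyclic rotation of its head values
   (each sent to the next larger one, the largest to the smallest) is injective
   and keeps [s] a head-high derangement, and it lowers [maj] by one modulo [m]:
   only the descents next to the position [p] of the largest head value change,
   by [-(p + 1)] and [+p], while the descent between positions [m - 1] and [m]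
   has weight [m]. So the residues of [maj] are equidistributed on head-high
   derangements. Every other derangement sends some [i < m] to some [v < m],
   and for [i != v] at most a [1 / (n - 1)] fraction of the derangements do so,
   so these form at most an [m ^ 2 / (n - 1)] fraction of all derangements. *)

Section CyclicSuccessor.

Variables (n : nat) (V : {set 'I_n}).

(* Minimising [if v < u then u else n + u] over [u \in V] picks the least element
   of [V] above [v], or the least element of [V] when [v] is the largest one. *)
Definition cyc_next (v : 'I_n) : 'I_n :=
  if v \in V then [arg min_(u < v in V) (if v < u then val u else n + u)] else v.

Lemma cyc_next_out v : v \notin V -> cyc_next v = v.
Proof. by rewrite /cyc_next => /negbTE ->. Qed.

Lemma cyc_next_mem v : v \in V -> cyc_next v \in V.
Proof. by move=> vV; rewrite /cyc_next vV; case: arg_minnP. Qed.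

Lemma cyc_next_succ v u : v \in V -> u \in V -> v < u -> v < cyc_next v <= u.
Proof.
move=> vV uV vu; rewrite /cyc_next vV; case: arg_minnP => // w _ /(_ u uV).
rewrite vu; case: ifP => [_ -> //| _ le_nu].
by have := ltn_ord u; rewrite ltnNge (leq_trans (leq_addr _ _) le_nu).
Qed.

Lemma cyc_next_max y u : y \in V -> {in V, forall x : 'I_n, x <= y} -> u \in V ->
  cyc_next y <= u.
Proof.
move=> yV ymax uV; rewrite /cyc_next yV; case: arg_minnP => // w wV /(_ u uV).
by rewrite !ltnNge ymax // ymax // leq_add2l.
Qed.

Lemma cyc_next_inj : injective cyc_next.
Proof.
suff lt_neq x z : x \in V -> z \in V -> x < z -> cyc_next x != cyc_next z.
  move=> x z exz; have [xV|xV] := boolP (x \in V); have [zV|zV] := boolP (z \in V).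
  - case: (ltngtP x z) => [xz|zx|/val_inj //].
      by move: (lt_neq x z xV zV xz); rewrite exz eqxx.
    by move: (lt_neq z x zV xV zx); rewrite exz eqxx.
  - by have := cyc_next_mem xV; rewrite exz cyc_next_out // (negbTE zV).
  - by have := cyc_next_mem zV; rewrite -exz cyc_next_out // (negbTE xV).
  - by rewrite -(cyc_next_out xV) -(cyc_next_out zV).
move=> xV zV xz; have [/existsP [u /andP[uV zu]]|ztop] := boolP [exists u in V, z < u].
  have /andP[_ le_xz] := cyc_next_succ xV zV xz.
  have /andP[lt_z _] := cyc_next_succ zV uV zu.
  by rewrite neq_ltn (leq_ltn_trans le_xz lt_z).
have zmax : {in V, forall u : 'I_n, u <= z}.
  move=> u uV; rewrite leqNgt; apply: contra ztop => zu.
  by apply/existsP; exists u; rewrite uV.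
have /andP[lt_x _] := cyc_next_succ xV zV xz.
by rewrite neq_ltn (leq_ltn_trans (cyc_next_max zV zmax xV) lt_x) orbT.
Qed.

Variable y : 'I_n.
Hypotheses (yV : y \in V) (ymax : {in V, forall x : 'I_n, x <= y}).

Lemma cyc_next_max_lt x : x \in V -> x != y -> cyc_next y < cyc_next x.
Proof.
move=> xV xy; have xly : x < y by rewrite ltn_neqAle ymax // andbT val_eqE.
have /andP[lt_x _] := cyc_next_succ xV yV xly.
exact: leq_ltn_trans (cyc_next_max yV ymax xV) lt_x.
Qed.

Lemma cyc_next_ltE x z : x \in V -> z \in V -> x != y -> z != y ->
  (cyc_next x < cyc_next z) = (x < z).
Proof.
have mono a b : a \in V -> b \in V -> b != y -> a < b -> cyc_next a < cyc_next b.
  move=> aV bV bny ab; have bly : b < y by rewrite ltn_neqAle ymax // andbT val_eqE.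
  have /andP[_ le_ab] := cyc_next_succ aV bV ab.
  by have /andP[lt_b _] := cyc_next_succ bV yV bly; apply: leq_ltn_trans lt_b.
move=> xV zV xy zy; case: (ltngtP x z) => [xz|zx|/val_inj ->]; last by rewrite ltnn.
  exact: mono.
by apply/negbTE; rewrite -leqNgt ltnW // mono.
Qed.

End CyclicSuccessor.

Section CycleHead.

Variables (n m : nat).
Implicit Types s t : 'S_n.

Definition head_vals s : {set 'I_n} := s @: [set i : 'I_n | i < m].

Definition cyc_perm (V : {set 'I_n}) : 'S_n := perm (@cyc_next_inj n V).

Definition cycle_head s : 'S_n := s * cyc_perm (head_vals s).

Definition high_head : {set 'S_n} :=
  [set s : 'S_n | [forall i : 'I_n, (i < m) ==> (m <= s i)]].

Lemma cycle_headE s i : cycle_head s i = cyc_next (head_vals s) (s i).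
Proof. by rewrite permM permE. Qed.

Lemma head_vals_mem s (i : 'I_n) : i < m -> s i \in head_vals s.
Proof. by move=> im; apply: imset_f; rewrite inE. Qed.

Lemma head_vals_out s (i : 'I_n) : m <= i -> s i \notin head_vals s.
Proof.
move=> mi; apply/imsetP => -[k]; rewrite inE => km /perm_inj eki.
by move: km; rewrite -eki ltnNge mi.
Qed.

Lemma cycle_head_tail s (i : 'I_n) : m <= i -> cycle_head s i = s i.
Proof. by move=> mi; rewrite cycle_headE cyc_next_out // head_vals_out. Qed.

Lemma head_vals_cycle_head s : head_vals (cycle_head s) = head_vals s.
Proof.
apply/eqP; rewrite eqEcard !card_imset ?leqnn ?andbT; try exact: perm_inj.
apply/subsetP => _ /imsetP[i iB ->]; rewrite cycle_headE.
by apply: cyc_next_mem; apply: imset_f.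
Qed.

Lemma cycle_head_inj : injective cycle_head.
Proof.
move=> s t est; have eV : head_vals t = head_vals s.
  by rewrite -head_vals_cycle_head -est head_vals_cycle_head.
by move: est; rewrite /cycle_head eV; apply: mulIg.
Qed.

Lemma cycle_head_high s : s \in high_head -> cycle_head s \in high_head.
Proof.
rewrite !inE => /forallP hs; apply/forallP => i; apply/implyP => im.
have /imsetP[k] := cyc_next_mem (head_vals_mem s im); rewrite inE -cycle_headE => km ->.
by have := hs k; rewrite km.
Qed.

Lemma derangement_cycle_head s :
  s \in high_head -> derangement (cycle_head s) = derangement s.
Proof.
move=> hs; have /[!inE]/forallP hs' := cycle_head_high hs.
move: hs; rewrite inE => /forallP hs.
apply: eq_forallb => i; have [im|mi] := ltnP i m; last by rewrite cycle_head_tail.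
have nfix (t : 'S_n) : m <= t i -> t i != i.
  by move=> mti; apply: contraTneq mti => ->; rewrite -ltnNge.
by have := hs i; have := hs' i; rewrite im /= => ? ?; rewrite !nfix.
Qed.

End CycleHead.

Lemma congr_summ n d (F G : 'I_n -> nat) :
  (forall j, F j = G j %[mod d]) -> \sum_(j < n) F j = \sum_(j < n) G j %[mod d].
Proof. by move=> eFG; rewrite -modn_summ (eq_bigr _ (fun j _ => eFG j)) modn_summ. Qed.

Lemma sum_indicator n (q : 'I_n) c : \sum_(j < n) (j == q) * c = c.
Proof. by rewrite (bigD1 q) //= eqxx mul1n big1 ?addn0 // => j /negbTE ->. Qed.

Lemma sum_succ_indicator n q : q <= n -> \sum_(j < n) (j.+1 == q) * q = q.
Proof.
case: q => [|q] qn; first by rewrite big1 // => j _; rewrite muln0.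
by rewrite -[RHS](sum_indicator (Ordinal qn)).
Qed.

Section Descents.

Variable n : nat.
Implicit Types s : 'S_n.

Definition descent s (j : 'I_n) : bool :=
  [exists k : 'I_n, (val k == j.+1) && (s k < s j)].

Lemma majE s : maj s = \sum_(j < n) descent s j * j.+1.
Proof.
apply: eq_bigr => j _; have [/existsP[k /andP[/eqP kj skj]]|nd] := boolP (descent s j).
  rewrite (eq_bigl (pred1 k)) ?big_pred1_eq ?mul1n // => k' /=.
  apply/andP/eqP => [[/eqP k'j _]|->]; last by rewrite kj eqxx skj.
  by apply: val_inj; rewrite /= k'j kj.
rewrite big_pred0 ?mul0n // => k'; apply/negP => k'j; move/negP: nd; apply.
by apply/existsP; exists k'.
Qed.

Lemma descentE s (j k : 'I_n) : val k = j.+1 -> descent s j = (s k < s j).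
Proof.
move=> kj; apply/existsP/idP => [[k' /andP[/eqP k'j]]|skj]; last by exists k; rewrite kj eqxx.
by have -> : k = k' by apply: val_inj; rewrite /= kj k'j.
Qed.

End Descents.

Section MajCycleHead.

Variables (n m : nat) (s : 'S_n) (p : 'I_n).
Hypotheses (mn : m <= n) (pm : p < m) (pmax : forall i : 'I_n, i < m -> s i <= s p).

Lemma descent_cycle_head_tail (j : 'I_n) :
  m <= j -> descent (cycle_head m s) j = descent s j.
Proof.
move=> mj; apply: eq_existsb => k; case: eqP => //= kj.
by rewrite !cycle_head_tail // kj ltnW.
Qed.

Lemma descent_cycle_head_head (j : 'I_n) : j.+1 < m ->
  descent (cycle_head m s) j * j.+1 + (j == p) * p.+1 =
  descent s j * j.+1 + (j.+1 == p) * p.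
Proof.
move=> jm; pose k := Ordinal (leq_trans jm mn).
have kj : k != j by rewrite -val_eqE /= neq_ltn ltnSn orbT.
set V := head_vals m s.
have yV : s p \in V := head_vals_mem s pm.
have ymax : {in V, forall x : 'I_n, x <= s p}.
  by move=> x /imsetP[i]; rewrite inE => im ->; apply: pmax.
have kV : s k \in V := @head_vals_mem n m s k jm.
have jV : s j \in V := head_vals_mem s (ltnW jm).
rewrite !(descentE _ (k := k)) // !cycle_headE -/V -[j.+1 == p]/(k == p).
have [ejp | jp] := eqVneq j p.
  have skj : s k != s j by rewrite (inj_eq perm_inj).
  rewrite -ejp in ymax *; rewrite (negbTE kj) ltnNge ltnW ?(cyc_next_max_lt jV ymax kV skj) //.
  by rewrite ltn_neqAle skj ymax // mul0n mul1n add0n addn0.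
have sjp : s j != s p by rewrite (inj_eq perm_inj).
have [ekp | kp] := eqVneq k p.
  rewrite -ekp in sjp ymax *.
  rewrite (cyc_next_max_lt kV ymax jV sjp) ltnNge ymax //.
  by rewrite !mul0n !mul1n addn0.
have skp : s k != s p by rewrite (inj_eq perm_inj).
by rewrite (cyc_next_ltE yV ymax kV jV skp sjp) !mul0n !addn0.
Qed.

Lemma descent_cycle_head_mod (j : 'I_n) :
  descent (cycle_head m s) j * j.+1 + (j == p) * p.+1 =
  descent s j * j.+1 + (j.+1 == p) * p %[mod m].
Proof.
case: (ltngtP j.+1 m) => [jm | mj | jm]; first by rewrite descent_cycle_head_head.
  have pj : p < j := leq_trans pm mj.
  by rewrite descent_cycle_head_tail // -val_eqE /= !gtn_eqF // ltnW.
have -> : (j == p) * p.+1 = (j == p) * m.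
  by case: eqP => [<- | _]; rewrite ?jm ?mul0n.
by rewrite jm gtn_eqF // mul0n addn0 -mulnDl !modnMl.
Qed.

End MajCycleHead.

Lemma maj_cycle_head n m (s : 'S_n) : 0 < m -> m <= n ->
  maj s = (maj (cycle_head m s)).+1 %[mod m].
Proof.
move=> m0 mn; pose i0 := Ordinal (leq_trans m0 mn).
have [p pm pmax] := @arg_maxnP _ i0 (fun i : 'I_n => i < m) (fun i => val (s i)) m0.
have pn : p <= n by apply: ltnW.
have := congr_summ (descent_cycle_head_mod mn pm pmax).
rewrite !big_split /= sum_indicator sum_succ_indicator // -!majE.
by rewrite -addSnnS => /eqP; rewrite eqn_modDr => /eqP.
Qed.

Lemma cyclic_nonincreasing_eq m (f : nat -> nat) : 0 < m ->
  (forall r, r < m -> f (r.+1 %% m) <= f r) -> forall r, r < m -> f r = f 0.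
Proof.
move=> m0 fS; have decr a b : a <= b -> b < m -> f b <= f a.
  elim: b => [|b IHb]; first by rewrite leqn0 => /eqP->.
  rewrite leq_eqVlt => /orP[/eqP-> //|ab] bm.
  by apply: leq_trans (IHb ab (ltnW bm)); have := fS b (ltnW bm); rewrite modn_small.
have mm : m.-1 < m by rewrite ltn_predL.
move=> r rm; apply/eqP; rewrite eqn_leq decr //=.
have := fS _ mm; rewrite prednK // modnn => /leq_trans; apply.
by apply: decr; rewrite // -ltnS prednK.
Qed.

Section MajClasses.

Variables (n m : nat).
Hypotheses (m1 : 1 < m) (mn : m <= n).

Let high_class r := derangements_maj_mod n m r :&: high_head n m.

Lemma card_high_class_succ_le r : r < m ->
  #|high_class (r.+1 %% m)| <= #|high_class r|.
Proof.
move=> rm; rewrite -(card_imset _ (@cycle_head_inj n m)); apply/subset_leq_card/subsetP.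
move=> x /imsetP[s]; rewrite in_setI => /andP[]; rewrite inE => /andP[ds mods] hs ->.
rewrite in_setI cycle_head_high // andbT inE derangement_cycle_head // ds /=.
move: mods; rewrite (maj_cycle_head s (ltnW m1) mn) -addn1 -[r.+1]addn1 eqn_modDr.
by rewrite (modn_small rm).
Qed.

Lemma card_high_class_eq r : r < m -> #|high_class r| = #|high_class 0|.
Proof. exact: cyclic_nonincreasing_eq (ltnW m1) card_high_class_succ_le r. Qed.

Lemma card_high_derangements :
  #|derangements n :&: high_head n m| = m * #|high_class 0|.
Proof.
rewrite -sum1_card (partition_big (fun s => Ordinal (ltn_pmod (maj s) (ltnW m1))) xpredT) //=.
rewrite (eq_bigr (fun _ => #|high_class 0|)) ?sum_nat_const ?card_ord // => t _.
rewrite -(card_high_class_eq (ltn_ord t)) -sum1_card; apply: eq_bigl => s.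
by rewrite !inE -val_eqE /= andbAC.
Qed.

End MajClasses.

Lemma card_bigcup_le (T I : finType) (P : pred I) (B : I -> {set T}) :
  #|\bigcup_(i | P i) B i| <= \sum_(i | P i) #|B i|.
Proof.
elim/big_rec2: _ => [|i k U _ IH]; first by rewrite cards0.
by rewrite (leq_trans (leq_card_setU _ _).1) // leq_add2l.
Qed.

Lemma sum_ord_lt_const n m c : m <= n -> \sum_(i < n | i < m) c = m * c.
Proof.
move=> mn; rewrite -[m in RHS]subn0 -sum_nat_const_nat.
by rewrite (big_nat_widen 0 m n) // big_mkord.
Qed.

Section DerangementsAt.

Variable n : nat.

Definition derangements_at (i v : 'I_n) : {set 'S_n} :=
  [set s in derangements n | s i == v].

Lemma derangements_at_self i : derangements_at i i = set0.
Proof.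
apply/setP => s; rewrite !inE andbC; case: eqP => //= sii.
by apply/forallP => /(_ i); rewrite sii eqxx.
Qed.

Lemma card_derangements_at_le i v w :
  i != v -> i != w -> #|derangements_at i v| <= #|derangements_at i w|.
Proof.
move=> iv iw; pose t := tperm v w.
have conj_inj : injective (fun s : 'S_n => (t * s * t)%g).
  by move=> a b /= eab; apply: (mulgI t); apply: (mulIg t).
rewrite -(card_imset _ conj_inj); apply/subset_leq_card/subsetP => x /imsetP[s].
rewrite !inE => /andP[/forallP ds /eqP siv] ->.
have ti : t i = i by rewrite tpermD // eq_sym.
apply/andP; split; last by rewrite !permM ti siv tpermL.
apply/forallP => j; rewrite !permM; apply: contraNneq (ds (t j)) => stj.
by apply/eqP/(@perm_inj _ t); rewrite stj tpermK.
Qed.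

Lemma card_derangements_sum i :
  #|derangements n| = \sum_(w : 'I_n) #|derangements_at i w|.
Proof.
rewrite -sum1_card (partition_big (fun s : 'S_n => s i) xpredT) //=.
by apply: eq_bigr => w _; rewrite -sum1_card; apply: eq_bigl => s; rewrite !inE.
Qed.

Lemma card_derangements_at_bound i v :
  i != v -> n.-1 * #|derangements_at i v| <= #|derangements n|.
Proof.
move=> iv; rewrite (card_derangements_sum i) (bigD1 i) //= -[n in n.-1]card_ord.
rewrite -(cardC1 i) -sum_nat_const (leq_trans _ (leq_addl _ _)) //.
by apply: leq_sum => w /[!inE] wi; apply: card_derangements_at_le; rewrite // eq_sym.
Qed.

Lemma card_derangements_not_high m : m <= n ->
  n.-1 * #|derangements n :\: high_head n m| <= m * m * #|derangements n|.
Proof.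
move=> mn.
have cover : derangements n :\: high_head n m \subset
    \bigcup_(i : 'I_n | i < m) \bigcup_(v : 'I_n | v < m) derangements_at i v.
  apply/subsetP => s; rewrite in_setD inE negb_forall => /andP[/existsP[i]].
  rewrite negb_imply -ltnNge => /andP[im sim] ds.
  by apply/bigcupP; exists i => //; apply/bigcupP; exists (s i); rewrite // inE ds eqxx.
apply: leq_trans (leq_mul (leqnn _) (subset_leq_card cover)) _.
apply: leq_trans (leq_mul (leqnn _) (card_bigcup_le _ _)) _.
rewrite -mulnA -(@sum_ord_lt_const n m _ mn) big_distrr leq_sum // => i _.
apply: leq_trans (leq_mul (leqnn _) (card_bigcup_le _ _)) _.
rewrite -(@sum_ord_lt_const n m _ mn) big_distrr leq_sum // => v _.
have [<-|iv] := eqVneq i v; first by rewrite derangements_at_self cards0 /= muln0.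
exact: card_derangements_at_bound.
Qed.

Lemma derangements_gt0 : 1 < n -> 0 < #|derangements n|.
Proof.
move=> n1; apply/card_gt0P; exists (perm (@ordS_inj n)); rewrite inE.
apply/forallP => i; rewrite permE -val_eqE /=.
have [iSn|nSi] := ltnP i.+1 n; first by rewrite modn_small // gtn_eqF.
have iSn : i.+1 = n by apply/eqP; rewrite eqn_leq ltn_ord.
by rewrite iSn modnn eq_sym -lt0n -ltnS iSn.
Qed.

End DerangementsAt.

Lemma ler_distB_itv (R : realFieldType) (x z y : R) :
  (0 <= x <= y -> 0 <= z <= y -> `|x - z| <= y)%R.
Proof. by move=> /andP[? ?] /andP[? ?]; rewrite ler_norml; apply/andP; split; lra. Qed.

Lemma mean_deviation_le (R : realFieldType) (m c b B : nat) :
  0 < m -> 0 < m * c + B -> b <= B ->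
  (`|(c + b)%:R / (m * c + B)%:R - 1 / m%:R| <= B%:R / (m * c + B)%:R :> R)%R.
Proof.
move=> m0 d0 bB; set d := m * c + B.
have d0R : (0 < d%:R :> R)%R by rewrite ltr0n.
have -> : ((c + b)%:R / d%:R - 1 / m%:R = ((m * b)%:R - B%:R) / (d * m)%:R :> R)%R.
  rewrite /d !natrD !natrM; field.
  by rewrite -natrM -natrD !pnatr_eq0 -!lt0n m0.
rewrite normf_div normr_nat ler_pdivrMr ?ltr0n ?muln_gt0 ?d0 ?m0 //.
rewrite [((d * m)%:R)%R]natrM mulrA divfK ?lt0r_neq0 // -natrM.
by apply: ler_distB_itv; rewrite !ler0n !ler_nat ?leq_pmulr // mulnC leq_mul2r bB orbT.
Qed.

Lemma maj_ratio_deviation n m r : 1 < m -> m <= n -> r < m ->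
  (`|maj_ratio n m r - 1 / m%:R| <= (m * m)%:R / n.-1%:R)%R.
Proof.
move=> m1 mn rm; set D := derangements n; set H := high_head n m.
set c := #|derangements_maj_mod n m 0 :&: H|.
set B := #|D :\: H|.
have cardD : #|D| = m * c + B by rewrite -(cardsID H D) (card_high_derangements m1 mn).
have cardDr : #|derangements_maj_mod n m r| =
    c + #|derangements_maj_mod n m r :\: H|.
  by rewrite -(cardsID H) (card_high_class_eq m1 mn rm).
have badDr : #|derangements_maj_mod n m r :\: H| <= B.
  by apply/subset_leq_card/setSD/subsetP => s; rewrite !inE => /andP[].
have n1 : 1 < n := leq_trans m1 mn.
have D0 : 0 < #|D| := derangements_gt0 n1.
have n1R : (0 < n.-1%:R :> rat)%R by rewrite ltr0n -ltnS prednK // ltnW.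
rewrite /maj_ratio -/D cardDr cardD; apply: le_trans (mean_deviation_le _ (ltnW m1) _ badDr) _.
  by rewrite -cardD.
rewrite -cardD ler_pdivrMr ?ltr0n // mulrAC ler_pdivlMr // -!natrM ler_nat.
by rewrite mulnC card_derangements_not_high.
Qed.

Theorem theorem2 (m r : nat) (hm : (2 <= m)%N) (hr : (r <= m - 1)%N) :
  forall eps : rat, (0 < eps)%R ->
  exists N : nat, forall n : nat, (N <= n)%N ->
    (`| maj_ratio n m r - 1 / m%:R | < eps)%R.
Proof.
move=> eps eps0; have rm : r < m by rewrite (leq_ltn_trans hr) // subn1 ltn_predL ltnW.
pose K := Num.bound ((m * m)%:R / eps)%R.
exists (K.+2 + m) => n Nn; have mn : m <= n := leq_trans (leq_addl _ _) Nn.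
have Kn : K < n.-1 by rewrite -ltnS prednK ?(leq_trans _ Nn) // leq_addr.
apply: le_lt_trans (maj_ratio_deviation hm mn rm) _.
rewrite ltr_pdivrMr ?ltr0n ?(leq_ltn_trans _ Kn) // mulrC -ltr_pdivrMr //.
apply: lt_le_trans (archi_boundP _) _; first by rewrite divr_ge0 // ltW.
by rewrite ler_nat ltnW.
Qed.
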